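(* Let $(X,Y,\tilde Y)$ be jointly distributed with $X\in\mathcal{X}$ and $Y,\tilde Y\in\{0,1\}$; let $Q$ be the distribution of $(X,Y)$ and $P$ the distribution of $(X,\tilde Y)$, so $P_X=Q_X$. Let $\eta_Q(x)=\Pr(Y=1\mid X=x)$, $\eta_P(x)=\Pr(\tilde Y=1\mid X=x)$ and $\rho_i(x)=\Pr(\tilde Y\ne i\mid Y=i,X=x)$ for $i\in\{0,1\}$. Suppose $\rho_1\equiv0$ and there is a strictly increasing function $\psi$ with $\rho_0(x)=\psi(\eta_Q(x))$ for all $x$. Then there exists a strictly increasing function $\phi$ such that $\eta_P(x)=\phi(\eta_Q(x))$ for all $x$. *)

From HB Require Import structures.
From mathcomp Require Import all_boot all_order all_algebra.
From mathcomp Require Import reals.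
Set Implicit Arguments. Unset Strict Implicit. Unset Printing Implicit Defensive.
Import Order.TTheory GRing.Theory Num.Theory.
Local Open Scope ring_scope.

(* A conditional law of (Y, Ytilde) given X = x, for every x : X:
   [pi x y yt] = Pr(Y = y, Ytilde = yt | X = x)  (true = label 1). *)

Definition etaQ {R : ringType} {X : Type} (pi : X -> bool -> bool -> R) (x : X) : R :=
  pi x true true + pi x true false.

Definition etaP {R : ringType} {X : Type} (pi : X -> bool -> bool -> R) (x : X) : R :=
  pi x true true + pi x false true.

From HB Require Import structures.
From mathcomp Require Import all_boot all_order all_algebra.
From mathcomp Require Import reals.
From mathcomp Require Import lra ring.
Import Order.TTheory GRing.Theory Num.Theory.
Local Open Scope ring_scope.

(* Since no label 1 is flipped, eta_P = eta_Q + rho_0 (1 - eta_Q)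
   = 1 - (1 - eta_Q)(1 - psi(eta_Q)).  When eta_Q grows, both factors
   1 - eta_Q and 1 - psi(eta_Q) shrink, and they are nonnegative because
   rho_0 <= 1, so eta_P grows strictly with eta_Q. *)

Lemma etaP_one_sided_noise (R : comNzRingType) (X : Type)
    (pi : X -> bool -> bool -> R) (r : R) (x : X) :
  pi x true false = 0 -> pi x false true = r * (1 - etaQ pi x) ->
  etaP pi x = 1 - (1 - etaQ pi x) * (1 - r).
Proof. by move=> pi10 pi01; rewrite /etaP pi01 /etaQ pi10; ring. Qed.

Section OneSidedNoiseLink.

Context {R : realDomainType} (psi : R -> R).

(* The branch [psi e > 1] is never taken at [e = etaQ pi x] since
   [rho0 <= 1]; it only makes the link strictly increasing on all of [0, 1]. *)
Definition one_sided_noise_link (e : R) : R :=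
  if psi e <= 1 then 1 - (1 - e) * (1 - psi e) else 1 + e.

Lemma one_sided_noise_lt (a b : R) :
  a < b -> b <= 1 -> psi a < psi b -> psi b <= 1 ->
  1 - (1 - a) * (1 - psi a) < 1 - (1 - b) * (1 - psi b).
Proof.
move=> ab b1 psi_ab psi_b1.
have lt_factor : (1 - b) * (1 - psi a) < (1 - a) * (1 - psi a).
  by rewrite ltr_pM2r ?subr_gt0 ?ltrD2l ?ltrN2 //; lra.
have le_factor : (1 - b) * (1 - psi b) <= (1 - b) * (1 - psi a).
  by rewrite ler_wpM2l ?subr_ge0 ?lerD2l ?lerN2 //; lra.
lra.
Qed.

Lemma one_sided_noise_link_incr :
  {in `[0, 1] &, forall a b, a < b -> psi a < psi b} ->
  {in `[0, 1] &, forall a b, a < b ->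
    one_sided_noise_link a < one_sided_noise_link b}.
Proof.
move=> psi_incr a b a01 b01 ab; have psi_ab := psi_incr a b a01 b01 ab.
move: a01 b01; rewrite !in_itv /= => /andP[a0 a1] /andP[b0 b1].
rewrite /one_sided_noise_link.
case: ifP => psi_a1; case: ifPn; rewrite -?ltNge => psi_b1.
- exact: one_sided_noise_lt.
- have : 0 <= (1 - a) * (1 - psi a) by rewrite mulr_ge0 // subr_ge0.
  lra.
- by move/negbT: psi_a1; rewrite -ltNge; lra.
- lra.
Qed.

End OneSidedNoiseLink.

Theorem lemma1 (R : realType) (X : Type) (pi : X -> bool -> bool -> R)
    (pi_ge0 : forall x y yt, 0 <= pi x y yt)
    (pi_sum1 : forall x, \sum_(y : bool) \sum_(yt : bool) pi x y yt = 1)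
    (rho0 rho1 : X -> R)
    (rho0_01 : forall x, 0 <= rho0 x <= 1)
    (rho1_01 : forall x, 0 <= rho1 x <= 1)
    (* rho_1(x) = Pr(Ytilde <> 1 | Y = 1, X = x) *)
    (rho1_def : forall x, pi x true false = rho1 x * etaQ pi x)
    (* rho_0(x) = Pr(Ytilde <> 0 | Y = 0, X = x) *)
    (rho0_def : forall x, pi x false true = rho0 x * (1 - etaQ pi x))
    (rho1_0 : forall x, rho1 x = 0)
    (psi : R -> R)
    (psi_incr : {in `[0, 1] &, forall a b, a < b -> psi a < psi b})
    (rho0_psi : forall x, rho0 x = psi (etaQ pi x)) :
  exists phi : R -> R,
    {in `[0, 1] &, forall a b, a < b -> phi a < phi b} /\
    (forall x, etaP pi x = phi (etaQ pi x)).
Proof.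
exists (one_sided_noise_link psi); split; first exact: one_sided_noise_link_incr.
move=> x; have /andP[_ psi_le1] := rho0_01 x; rewrite rho0_psi in psi_le1.
rewrite /one_sided_noise_link psi_le1 -rho0_psi.
by apply: etaP_one_sided_noise; rewrite ?rho1_def ?rho1_0 ?mul0r.
Qed.
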